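(* Let $A=(A,m_A,\mu_A,\Delta_A,\varepsilon_A)$ be a commutative bialgebra and let $\text{Ш}_e(A)=(\text{Ш}_e(A),\diamond,P_e,j_A)$ be the free commutative extended Rota-Baxter algebra of weight $(\lambda,\kappa)$ on $A$. Let $\mu\in\mathbf{k}$ be a root of $t^2-\lambda t+\kappa$. Then there exists a unique homomorphism $\varepsilon_e:\text{Ш}_e(A)\to\mathbf{k}$ of extended Rota-Baxter algebras of weight $(\lambda,\kappa)$ (where $\mathbf{k}$ carries the operator $-\mu\,\mathrm{id}$) such that $$\varepsilon_e\circ j_A=\varepsilon_A\quad\text{and}\quad \varepsilon_e\circ P_e=-\mu\,\mathrm{id}\circ\varepsilon_e.$$
   Context: $\mathbf{k}$ is a commutative unitary ring. An extended Rota-Baxter operator of weight $(\lambda,\kappa)$ on an algebra $R$ is a linear $P:R\to R$ with $P(x)P(y)=P(xP(y))+P(P(x)y)+\lambda P(xy)+\kappa xy$. $\text{Ш}_e(A)=\bigoplus_{n\ge1}A^{\otimes n}$, $P_e(\mathfrak{a})=1_A\otimes\mathfrak{a}$, $j_A:A\to\text{Ш}_e(A)$ the inclusion $A=A^{\otimes1}$, and $\diamond$ the product defined recursively on pure tensors $\mathfrak{a}=a_0\otimes\mathfrak{a}'\in A^{\otimes(m+1)}$, $\mathfrak{b}=b_0\otimes\mathfrak{b}'\in A^{\otimes(n+1)}$ by $a_0b_0$ ($m=n=0$), $a_0b_0\otimes\mathfrak{b}'$ ($m=0,n\ge1$), $a_0b_0\otimes\mathfrak{a}'$ ($m\ge1,n=0$),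 and $a_0b_0\otimes(\mathfrak{a}'\diamond(1_A\otimes\mathfrak{b}')+(1_A\otimes\mathfrak{a}')\diamond\mathfrak{b}'+\lambda\mathfrak{a}'\diamond\mathfrak{b}')+\kappa a_0b_0(\mathfrak{a}'\diamond\mathfrak{b}')$ ($m,n\ge1$). It is the free commutative extended Rota-Baxter algebra of weight $(\lambda,\kappa)$ on $A$ (universal property with respect to algebra homomorphisms from $A$). $-\mu\,\mathrm{id}$ is an extended Rota-Baxter operator of weight $(\lambda,\kappa)$ on $\mathbf{k}$ since $\mu^2-\lambda\mu+\kappa=0$. *)

From HB Require Import structures.
From mathcomp Require Import all_boot all_order all_algebra.
Set Implicit Arguments. Unset Strict Implicit. Unset Printing Implicit Defensive.
Import GRing.Theory.
Local Open Scope ring_scope.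

Definition ext_RB_op (k : comPzRingType) (R : comAlgType k) (lam kap : k)
    (P : {linear R -> R}) : Prop :=
  forall x y : R,
    P x * P y = P (x * P y) + P (P x * y) + lam *: P (x * y) + kap *: (x * y).

Definition ext_RB_hom (k : comPzRingType) (R S : comAlgType k)
    (P : R -> R) (Q : S -> S) (g : {lrmorphism R -> S}) : Prop :=
  forall x : R, g (P x) = Q (g x).

Definition free_comm_ext_RB (k : comPzRingType) (lam kap : k) (A S : comAlgType k)
    (PS : {linear S -> S}) (j : {lrmorphism A -> S}) : Prop :=
  ext_RB_op lam kap PS /\
  forall (R : comAlgType k) (PR : {linear R -> R}),
    ext_RB_op lam kap PR ->
    forall f : {lrmorphism A -> R},
      exists g : {lrmorphism S -> R},
        [/\ ext_RB_hom PS PR g, (forall a, g (j a) = f a) &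
            forall g' : {lrmorphism S -> R},
              ext_RB_hom PS PR g' -> (forall a, g' (j a) = f a) -> g' =1 g].

Definition negmul_op (k : comPzRingType) (mu : k) : k^o -> k^o :=
  fun x => - mu * x.

From HB Require Import structures.
From mathcomp Require Import all_boot all_order all_algebra.
From mathcomp Require Import ring.
Import GRing.Theory.
Local Open Scope ring_scope.

(* Since mu is a root of t^2 - lam t + kap, scaling by -mu is an extended
   Rota-Baxter operator of weight (lam, kap) on any commutative algebra, in
   particular on k itself.  Hence epsA : A -> k is a morphism into an extended
   Rota-Baxter algebra, and the universal property of Ш_e(A) provides the
   unique extension epse. *)

Lemma lalg_scalar_oner_neq0 {k : pzRingType} (A : lalgType k) : (1 : k) != 0.
Proof.
apply: contraNneq (@oner_neq0 A) => k1_0.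
by rewrite -[1 : A]scale1r k1_0 scale0r.
Qed.

(* Algebras are nontrivial rings, so k^o is a comAlgType over k only under
   1 != 0; the proof of that fact is stored in the type so that the instances
   below are found by inference.  All structure is that of k^o, hence
   morphisms into scalar_alg and into k^o are convertible. *)
Definition scalar_alg {k : comPzRingType} of (1 : k) != 0 : Type := k^o.

Section ScalarAlgebra.
Variables (k : comPzRingType) (k_nz : (1 : k) != 0).
Local Notation K := (scalar_alg k_nz).

HB.instance Definition _ := GRing.ComPzRing.on K.
HB.instance Definition _ := GRing.Lmodule.on K.
HB.instance Definition _ := GRing.PzSemiRing_isNonZero.Build K k_nz.
HB.instance Definition _ := GRing.LSemiModule_isLSemiAlgebra.Build k K (@mulrA k).
HB.instance Definition _ := GRing.Lalgebra_isComAlgebra.Build k K.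
End ScalarAlgebra.

Lemma ext_RB_op_scale_root {k : comPzRingType} (R : comAlgType k) {lam kap mu : k} :
  mu ^+ 2 - lam * mu + kap = 0 ->
  ext_RB_op lam kap ((- mu) \*: idfun : {linear R -> R}).
Proof.
move=> mu_root x y /=.
rewrite -!scalerAl -!scalerAr !scalerA -!scalerDl; congr (_ *: _).
have -> : kap = lam * mu - mu ^+ 2.
  by apply/eqP; rewrite -subr_eq0 -mu_root; apply/eqP; ring.
ring.
Qed.

Theorem lemma4p2 (k : comPzRingType) (lam kap : k) (A : comAlgType k)
    (epsA : {lrmorphism A -> k^o})
    (S : comAlgType k) (Pe : {linear S -> S}) (jA : {lrmorphism A -> S})
    (Hfree : free_comm_ext_RB lam kap Pe jA)
    (mu : k) (Hmu : mu ^+ 2 - lam * mu + kap = 0) :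
  exists epse : {lrmorphism S -> k^o},
    [/\ (forall a : A, epse (jA a) = epsA a),
        (forall x : S, epse (Pe x) = negmul_op mu (epse x)) &
        forall e' : {lrmorphism S -> k^o},
          (forall a : A, e' (jA a) = epsA a) ->
          (forall x : S, e' (Pe x) = negmul_op mu (e' x)) ->
          e' =1 epse].
Proof.
have k_nz : (1 : k) != 0 := lalg_scalar_oner_neq0 A.
have [_ free] := Hfree.
have [g [gP gj g_uniq]] := free _ _ (ext_RB_op_scale_root (scalar_alg k_nz) Hmu)
  (epsA : {lrmorphism A -> scalar_alg k_nz}).
exists (g : {lrmorphism S -> k^o}); split=> // e' e'j e'P.
exact: (g_uniq (e' : {lrmorphism S -> scalar_alg k_nz})).
Qed.
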